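(* Let $G$ be a periodic locally nilpotent group. If $G$ contains a finite contranormal subgroup, then the $\mathcal{F}$-perfect part $\mathcal{F}(G)$ of $G$ has finite index in $G$.
   Context: A subgroup $H$ of $G$ is contranormal in $G$ if its normal closure $H^G$ equals $G$. A group is $\mathcal{F}$-perfect if it has no proper subgroup of finite index. The $\mathcal{F}$-perfect part $\mathcal{F}(G)$ of $G$ is the subgroup generated by all $\mathcal{F}$-perfect subgroups of $G$; it is itself $\mathcal{F}$-perfect and is the largest $\mathcal{F}$-perfect subgroup of $G$. *)

From Stdlib Require Import List Arith.

Record group := Group {
  carrier :> Type;
  gmul : carrier -> carrier -> carrier;
  ginv : carrier -> carrier;
  gone : carrier;
  gmulA : forall x y z, gmul x (gmul y z) = gmul (gmul x y) z;
  gmul1l : forall x, gmul gone x = x;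
  gmulVl : forall x, gmul (ginv x) x = gone
}.

Section GroupDefs.
Variable G : group.

Definition gsubset := G -> Prop.

Definition whole : gsubset := fun _ => True.

Definition is_subgroup (H : gsubset) : Prop :=
  H (gone G) /\ (forall x y, H x -> H y -> H (gmul G x (ginv G y))).

Definition included (A B : gsubset) : Prop := forall x, A x -> B x.

Definition generated (A : gsubset) : gsubset :=
  fun x => forall K, is_subgroup K -> included A K -> K x.

Fixpoint gpow (x : G) (n : nat) : G :=
  match n with 0 => gone G | S m => gmul G (gpow x m) x end.

Definition gconj (x g : G) : G := gmul G (gmul G (ginv G g) x) g.

Definition gcomm (a b : G) : G :=
  gmul G (gmul G (gmul G (ginv G a) (ginv G b)) a) b.

Definition normal_closure (H : gsubset) : gsubset :=
  generated (fun x => exists h g, H h /\ x = gconj h g).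

Definition contranormal (H : gsubset) : Prop :=
  is_subgroup H /\ forall x, normal_closure H x.

Definition finite_set (A : gsubset) : Prop :=
  exists l : list G, forall x, A x -> In x l.

Definition finite_index (K H : gsubset) : Prop :=
  exists l : list G, (forall t, In t l -> H t) /\
    forall h, H h -> exists t, In t l /\ K (gmul G (ginv G t) h).

Definition F_perfect (H : gsubset) : Prop :=
  is_subgroup H /\
  forall K, is_subgroup K -> included K H -> finite_index K H -> included H K.

Definition F_part : gsubset :=
  generated (fun x => exists H, F_perfect H /\ H x).

Definition periodic : Prop :=
  forall x : G, exists n, 0 < n /\ gpow x n = gone G.

(* lower central series of a subgroup H: gamma_1 = H, gamma_{i+1} = [gamma_i, H] *)
Fixpoint lower_central (H : gsubset) (n : nat) : gsubset :=
  match n with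
  | 0 => H
  | S m => generated (fun x => exists a h, lower_central H m a /\ H h /\ x = gcomm a h)
  end.

Definition nilpotent_subgroup (H : gsubset) : Prop :=
  is_subgroup H /\ exists n, forall x, lower_central H n x -> x = gone G.

Definition locally_nilpotent : Prop :=
  forall l : list G, nilpotent_subgroup (generated (fun x => In x l)).

End GroupDefs.

From Stdlib Require Import List Arith.
From Stdlib Require Import Classical.

(* Let H be a finite contranormal subgroup of the locally nilpotent group G.
   First, G = H K for every subgroup K of finite index.  Let N be the normal
   core of K, L the nilpotent subgroup generated by H and a transversal of N,
   and A_i = <H, N, gamma_i(L)> with gamma_0(L) = L, so A_0 = L N = G.  Since
   x^g = x [x, g], while [H, gamma_i(L)] and [gamma_(i+1)(L), L] lie in
   gamma_(i+1)(L), the generators of A_i normalize A_(i+1); so A_i = G makes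
   A_(i+1) a normal subgroup containing the contranormal H, i.e. A_(i+1) = G.
   For gamma_c(L) = 1 this gives G = H N, and N is contained in K.
   Next, choose a subgroup K0 of finite index with H ∩ K0 minimal.  For every
   K of finite index, H ∩ K0 then lies in K, and G = H (K ∩ K0) forces K0 ⊆ K.
   Hence K0 has no proper subgroup of finite index, so K0 ⊆ F(G). *)

Lemma list_choice {A B : Type} (P : A -> B -> Prop) (l : list A) :
  exists l' : list B, forall a, In a l -> (exists b, P a b) -> exists b, In b l' /\ P a b.
Proof.
  induction l as [|a l [l' hl']].
  - exists nil. intros a [].
  - destruct (classic (exists b, P a b)) as [[b hb] | none].
    + exists (b :: l'). intros a' [<- | ha'] hex.
      * exists b. split; [left; reflexivity | exact hb].
      * destruct (hl' a' ha' hex) as (b' & ib' & hb'). exists b'. split; [right|]; assumption.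
    + exists l'. intros a' [<- | ha'] hex; [contradiction | auto].
Qed.

Section Groups.
Variable G : group.

Local Notation "x * y" := (gmul G x y) (at level 40, left associativity).
Local Notation "x ^-1" := (ginv G x) (at level 2, left associativity, format "x ^-1").
Local Notation "x ^ g" := (gconj G x g).
Local Notation "[~ x , y ]" := (gcomm G x y) (format "[~  x ,  y ]").
Local Notation one := (gone G).

Lemma mulgV (x : G) : x * x^-1 = one.
Proof.
  rewrite <- (gmul1l G (x * x^-1)), <- (gmulVl G x^-1) at 1.
  rewrite <- gmulA, (gmulA G x^-1 x x^-1), gmulVl, gmul1l.
  apply gmulVl.
Qed.

Lemma mulg1 (x : G) : x * one = x.
Proof. rewrite <- (gmulVl G x), gmulA, mulgV. apply gmul1l. Qed.

Lemma invg_unique (x y : G) : x * y = one -> x^-1 = y.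
Proof. intro E. rewrite <- (mulg1 x^-1), <- E, gmulA, gmulVl. apply gmul1l. Qed.

Lemma invgK (x : G) : x^-1^-1 = x.
Proof. apply invg_unique, gmulVl. Qed.

Lemma invMg (x y : G) : (x * y)^-1 = y^-1 * x^-1.
Proof. apply invg_unique. rewrite gmulA, <- (gmulA G x y), mulgV, mulg1. apply mulgV. Qed.

Lemma invg1 : one^-1 = one.
Proof. apply invg_unique, gmul1l. Qed.

Lemma mulgVK (x y : G) : x * y^-1 * y = x.
Proof. rewrite <- gmulA, gmulVl. apply mulg1. Qed.

Lemma mulgKV (x y : G) : x * y * y^-1 = x.
Proof. rewrite <- gmulA, mulgV. apply mulg1. Qed.

Ltac group_eq := unfold gconj, gcomm;
  repeat progress rewrite ?invMg, ?invgK, ?invg1, ?gmulA, ?mulgVK, ?mulgKV,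
    ?gmulVl, ?mulgV, ?gmul1l, ?mulg1;
  reflexivity.

Lemma conj_mulg_comm (x g : G) : x ^ g = x * [~ x, g].
Proof. group_eq. Qed.

Lemma invg_comm (x g : G) : [~ x, g]^-1 = [~ g, x].
Proof. group_eq. Qed.

Section Subgroup.
Variable H : gsubset G.
Hypothesis sH : is_subgroup G H.

Lemma subgroup1 : H one.
Proof. exact (proj1 sH). Qed.

Lemma subgroupV x : H x -> H x^-1.
Proof. intro hx. rewrite <- (gmul1l G x^-1). exact (proj2 sH _ _ subgroup1 hx). Qed.

Lemma subgroupM x y : H x -> H y -> H (x * y).
Proof. intros hx hy. rewrite <- (invgK y). apply (proj2 sH); auto using subgroupV. Qed.

Lemma subgroupJ x g : H x -> H g -> H (x ^ g).
Proof. intros hx hg. unfold gconj. auto using subgroupM, subgroupV. Qed.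

Lemma subgroup_comm x y : H x -> H y -> H [~ x, y].
Proof. intros hx hy. unfold gcomm. auto using subgroupM, subgroupV. Qed.

Lemma conj_subgroup g : is_subgroup G (fun x => H (x ^ g)).
Proof.
  split.
  - replace (one ^ g) with one by group_eq. exact subgroup1.
  - intros x y hx hy.
    replace ((x * y^-1) ^ g) with (x ^ g * (y ^ g)^-1) by group_eq.
    exact (proj2 sH _ _ hx hy).
Qed.

End Subgroup.

Ltac subgroup_mem sH :=
  repeat first
    [ assumption
    | match goal with
      | |- _ (gmul _ _ _) => apply (subgroupM _ sH)
      | |- _ (ginv _ _) => apply (subgroupV _ sH)
      end ].

Lemma whole_subgroup : is_subgroup G (whole G).
Proof. split; [exact I | intros; exact I]. Qed.

Definition meet (A B : gsubset G) : gsubset G := fun x => A x /\ B x.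

Lemma meet_subgroup A B : is_subgroup G A -> is_subgroup G B -> is_subgroup G (meet A B).
Proof.
  intros sA sB. split.
  - split; apply subgroup1; assumption.
  - intros x y [] []. split; apply subgroupM, subgroupV; assumption.
Qed.

Lemma generated_subgroup A : is_subgroup G (generated G A).
Proof.
  split.
  - intros K sK _. exact (subgroup1 K sK).
  - intros x y hx hy K sK AK. apply (proj2 sK); [apply hx | apply hy]; assumption.
Qed.

Lemma mem_generated (A : gsubset G) x : A x -> generated G A x.
Proof. intros hx K _ AK. auto. Qed.

Lemma generated_min A K : is_subgroup G K -> included G A K -> included G (generated G A) K.
Proof. intros sK AK x hx. exact (hx K sK AK). Qed.

Definition normal (N : gsubset G) : Prop :=
  is_subgroup G N /\ forall x g, N x -> N (x ^ g).

Lemma comm_normal_r N x g : normal N -> N g -> N [~ x, g].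
Proof.
  intros [sN nN] hg. replace [~ x, g] with (g^-1 ^ x * g) by group_eq.
  subgroup_mem sN. apply nN. subgroup_mem sN.
Qed.

Lemma contranormal_sub_normal H N :
  contranormal G H -> normal N -> included G H N -> forall x, N x.
Proof.
  intros [_ hH] [sN nN] HN x. eapply (generated_min _ N sN); [|apply hH].
  intros y (h & g & hh & ->). auto.
Qed.

Definition normalizes (g : G) (B : gsubset G) : Prop := forall x, B x -> B (x ^ g).

Lemma normalizes_generated_by T B g :
  is_subgroup G B -> (forall x, T x -> B (x ^ g)) ->
  included G (generated G T) (fun x => B (x ^ g)).
Proof. intros sB TB. apply generated_min; auto using conj_subgroup. Qed.

Lemma generated_normalizes S B :
  is_subgroup G B -> (forall g, S g -> S g^-1) -> (forall g, S g -> normalizes g B) ->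
  forall g, generated G S g -> normalizes g B.
Proof.
  intros sB SV SB.
  assert (sNB : is_subgroup G (fun g => normalizes g B /\ normalizes g^-1 B)).
  { split.
    - split; intros x hx; [replace (x ^ one) with x | replace (x ^ one^-1) with x];
        auto; group_eq.
    - intros a b [ha ha'] [hb hb']. split; intros x hx.
      + replace (x ^ (a * b^-1)) with ((x ^ a) ^ b^-1) by group_eq. auto.
      + replace (x ^ (a * b^-1)^-1) with ((x ^ b) ^ a^-1) by group_eq. auto. }
  intros g hg. apply (generated_min S _ sNB); auto.
  intros a ha. auto.
Qed.

Section LowerCentral.
Variable L : gsubset G.
Hypothesis sL : is_subgroup G L.

Lemma lower_central_subgroup n : is_subgroup G (lower_central G L n).
Proof. destruct n; [exact sL | apply generated_subgroup]. Qed.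

Lemma comm_lower_central n a h :
  lower_central G L n a -> L h -> lower_central G L (S n) [~ a, h].
Proof. intros ha hh. apply mem_generated. eauto. Qed.

Lemma lower_central_succ_sub n : included G (lower_central G L (S n)) (lower_central G L n).
Proof.
  induction n as [|n IH]; apply generated_min; try apply lower_central_subgroup;
    intros y (a & h & ha & hh & ->).
  - apply subgroup_comm; assumption.
  - apply comm_lower_central; auto.
Qed.

Lemma lower_central_sub n : included G (lower_central G L n) L.
Proof.
  induction n as [|n IH]; intros x hx; [exact hx|].
  apply IH, lower_central_succ_sub, hx.
Qed.

Lemma comm_lower_central_l n x g :
  L x -> lower_central G L n g -> lower_central G L (S n) [~ x, g].
Proof.
  intros hx hg. rewrite <- invg_comm.
  apply subgroupV; [apply lower_central_subgroup | apply comm_lower_central; auto].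
Qed.

End LowerCentral.

Definition supplement (A B : gsubset G) : Prop :=
  forall g, exists a, A a /\ B (a^-1 * g).

Lemma supplement_mono A A' B B' :
  included G A A' -> included G B B' -> supplement A B -> supplement A' B'.
Proof. intros AA BB sAB g. destruct (sAB g) as (a & ha & hb). eauto. Qed.

Lemma mul_normal_subgroup H N :
  is_subgroup G H -> normal N -> is_subgroup G (fun x => exists h, H h /\ N (h^-1 * x)).
Proof.
  intros sH [sN nN]. split.
  - exists one. split; [apply subgroup1; assumption|].
    rewrite invg1, gmul1l. apply subgroup1; assumption.
  - intros x y (a & ha & hx) (b & hb & hy).
    exists (a * b^-1). split; [subgroup_mem sH|].
    replace ((a * b^-1)^-1 * (x * y^-1)) with ((a^-1 * x * (b^-1 * y)^-1) ^ b^-1)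
      by group_eq.
    apply nN. subgroup_mem sN.
Qed.

Section Layers.
Variables H N L : gsubset G.
Hypotheses (cH : contranormal G H) (nN : normal N) (sL : is_subgroup G L).
Hypothesis HL : included G H L.

Definition layer_gens i : gsubset G :=
  fun x => H x \/ N x \/ lower_central G L i x.

Definition layer i : gsubset G := generated G (layer_gens i).

Lemma layer_succ_normal i : (forall g, layer i g) -> normal (layer (S i)).
Proof.
  intro layer_whole.
  pose proof (proj1 cH) as sH. pose proof (proj1 nN) as sN.
  pose proof (generated_subgroup (layer_gens (S i))) as sB.
  assert (gensB : included G (layer_gens (S i)) (layer (S i))) by exact (mem_generated _).
  split; [exact sB|]. intros x g0. revert x.
  apply (generated_normalizes (layer_gens i)); [exact sB | | | apply layer_whole].
  - intros g [hg | [hg | hg]]; [left | right; left | right; right];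
      apply subgroupV; auto using lower_central_subgroup.
  - intros g hg. apply normalizes_generated_by; [exact sB|].
    intros x [hx | [hx | hx]].
    + destruct hg as [hg | hg].
      * apply gensB. left. apply subgroupJ; auto.
      * rewrite conj_mulg_comm. apply (subgroupM _ sB); apply gensB; [left; exact hx|].
        right. destruct hg as [hg | hg]; [left | right].
        -- apply comm_normal_r; assumption.
        -- apply comm_lower_central_l; auto.
    + apply gensB. right. left. apply (proj2 nN). exact hx.
    + rewrite conj_mulg_comm. apply (subgroupM _ sB); apply gensB; [right; right; exact hx|].
      right. destruct hg as [hg | [hg | hg]]; [right | left | right].
      * apply lower_central_succ_sub, comm_lower_central; auto.
      * apply comm_normal_r; assumption.
      * apply lower_central_succ_sub, comm_lower_central; auto.
        exact (lower_central_sub L sL i g hg).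
Qed.

Lemma layers_whole i g : supplement L N -> layer i g.
Proof.
  intro LN. revert g. induction i as [|i IH]; intro g.
  - destruct (LN g) as (t & ht & hn).
    replace g with (t * (t^-1 * g)) by group_eq.
    apply (subgroupM _ (generated_subgroup _)); apply mem_generated; red; auto.
  - apply (contranormal_sub_normal H); [exact cH | apply layer_succ_normal, IH |].
    intros x hx. apply mem_generated. left. exact hx.
Qed.

End Layers.

Lemma contranormal_supplement H N L :
  contranormal G H -> normal N -> nilpotent_subgroup G L -> included G H L ->
  supplement L N -> supplement H N.
Proof.
  intros cH nN [sL [n lower_central_trivial]] HL LN g.
  pose proof (proj1 cH) as sH. pose proof (proj1 nN) as sN.
  apply (generated_min (layer_gens H N L n) _ (mul_normal_subgroup H N sH nN)).
  - intros x [hx | [hx | hx]].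
    + exists x. rewrite gmulVl. split; [exact hx | exact (subgroup1 N sN)].
    + exists one. rewrite invg1, gmul1l. split; [exact (subgroup1 H sH) | exact hx].
    + rewrite (lower_central_trivial x hx). exists one.
      rewrite invg1, gmul1l. split; apply subgroup1; assumption.
  - exact (layers_whole H N L cH nN sL HL n g LN).
Qed.

Definition of_finite_index (K : gsubset G) : Prop :=
  exists l : list G, supplement (fun t => In t l) K.

Lemma of_finite_index_whole : of_finite_index (whole G).
Proof. exists (one :: nil). intro g. exists one. split; [left; reflexivity | exact I]. Qed.

Lemma of_finite_index_mono K K' : included G K K' -> of_finite_index K -> of_finite_index K'.
Proof.
  intros KK [l hl]. exists l. revert hl.
  apply supplement_mono; [intros t ht; exact ht | exact KK].
Qed.

Lemma of_finite_index_trans K K0 :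
  finite_index G K K0 -> of_finite_index K0 -> of_finite_index K.
Proof.
  intros [l1 [_ h1]] [l0 h0].
  exists (map (fun p => fst p * snd p) (list_prod l0 l1)). intro g.
  destruct (h0 g) as (t & it & kt). destruct (h1 _ kt) as (s & is & ks).
  exists (t * s). split.
  - apply in_map_iff. exists (t, s). split; [reflexivity | apply in_prod; assumption].
  - replace ((t * s)^-1 * g) with (s^-1 * (t^-1 * g)) by group_eq. exact ks.
Qed.

Lemma of_finite_index_meet K1 K2 : is_subgroup G K1 -> is_subgroup G K2 ->
  of_finite_index K1 -> of_finite_index K2 -> of_finite_index (meet K1 K2).
Proof.
  intros sK1 sK2 [l1 h1] [l2 h2].
  destruct (list_choice (fun p u => K1 ((fst p)^-1 * u) /\ K2 ((snd p)^-1 * u))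
              (list_prod l1 l2)) as [l hl].
  exists l. intro g.
  destruct (h1 g) as (t1 & i1 & k1). destruct (h2 g) as (t2 & i2 & k2).
  destruct (hl (t1, t2)) as (u & iu & u1 & u2);
    [apply in_prod; assumption | exists g; split; assumption |].
  simpl in u1, u2. exists u. split; [exact iu | split].
  - replace (u^-1 * g) with ((t1^-1 * u)^-1 * (t1^-1 * g)) by group_eq. subgroup_mem sK1.
  - replace (u^-1 * g) with ((t2^-1 * u)^-1 * (t2^-1 * g)) by group_eq. subgroup_mem sK2.
Qed.

Lemma of_finite_index_conj K t : of_finite_index K -> of_finite_index (fun x => K (x ^ t)).
Proof.
  intros [l hl]. exists (map (fun u => t * u * t^-1) l). intro g.
  destruct (hl (g ^ t)) as (u & iu & ku).
  exists (t * u * t^-1). split; [apply in_map_iff; eauto|].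
  replace (((t * u * t^-1)^-1 * g) ^ t) with (u^-1 * g ^ t) by group_eq. exact ku.
Qed.

Definition conjugates_meet (K : gsubset G) (l : list G) : gsubset G :=
  fun x => forall t, In t l -> K (x ^ t).

Lemma conjugates_meet_subgroup K l : is_subgroup G K -> is_subgroup G (conjugates_meet K l).
Proof.
  intro sK. split.
  - intros t _. exact (subgroup1 _ (conj_subgroup K sK t)).
  - intros x y hx hy t ht. apply (proj2 (conj_subgroup K sK t)); auto.
Qed.

Lemma of_finite_index_conjugates_meet K l : is_subgroup G K -> of_finite_index K ->
  of_finite_index (conjugates_meet K l).
Proof.
  intros sK fK. induction l as [|a l IH].
  - apply (of_finite_index_mono (whole G)); [intros x _ t [] | exact of_finite_index_whole].
  - apply (of_finite_index_mono (meet (fun x => K (x ^ a)) (conjugates_meet K l))).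
    + intros x [ha hl] t [<- | ht]; auto.
    + apply of_finite_index_meet; auto using conj_subgroup, conjugates_meet_subgroup,
        of_finite_index_conj.
Qed.

Definition core (K : gsubset G) : gsubset G := fun x => forall y, K (x ^ y).

Lemma core_sub K : included G (core K) K.
Proof. intros x hx. replace x with (x ^ one) by group_eq. apply hx. Qed.

Lemma core_normal K : is_subgroup G K -> normal (core K).
Proof.
  intro sK. split; [split|].
  - intro y. exact (subgroup1 _ (conj_subgroup K sK y)).
  - intros x z hx hz y. apply (proj2 (conj_subgroup K sK y)); auto.
  - intros x g hx y. replace ((x ^ g) ^ y) with (x ^ (g * y)) by group_eq. apply hx.
Qed.

Lemma of_finite_index_core K :
  is_subgroup G K -> of_finite_index K -> of_finite_index (core K).
Proof.
  intros sK fK. pose proof fK as [l hl].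
  apply (of_finite_index_mono (conjugates_meet K l));
    [|apply of_finite_index_conjugates_meet; assumption].
  intros x hx y. destruct (hl y) as (t & it & kt).
  replace (x ^ y) with ((x ^ t) ^ (t^-1 * y)) by group_eq.
  apply subgroupJ; auto.
Qed.

Lemma contranormal_supplement_finite_index H K :
  finite_set G H -> contranormal G H -> locally_nilpotent G ->
  is_subgroup G K -> of_finite_index K -> supplement H K.
Proof.
  intros [lH inH] cH LN sK fK.
  destruct (of_finite_index_core K sK fK) as [l hl].
  apply (supplement_mono H H (core K) K); [intros x hx; exact hx | apply core_sub |].
  apply (contranormal_supplement H (core K) (generated G (fun x => In x (lH ++ l))));
    auto using core_normal.
  - intros x hx. apply mem_generated, in_or_app. auto.
  - revert hl. apply supplement_mono; [|intros x hx; exact hx].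
    intros t ht. apply mem_generated, in_or_app. auto.
Qed.

Lemma exists_finite_index_least_on s : exists K0,
  is_subgroup G K0 /\ of_finite_index K0 /\
  forall K, is_subgroup G K -> of_finite_index K -> forall x, In x s -> K0 x -> K x.
Proof.
  induction s as [|a s (K0 & sK0 & fK0 & leK0)].
  - exists (whole G). split; [exact whole_subgroup | split; [exact of_finite_index_whole|]].
    intros K _ _ x [].
  - destruct (classic (exists K, is_subgroup G K /\ of_finite_index K /\ K0 a /\ ~ K a))
      as [(Ka & sKa & fKa & a0 & na) | none].
    + exists (meet K0 Ka). split; [apply meet_subgroup; assumption|].
      split; [apply of_finite_index_meet; assumption|].
      intros K sK fK x [<- | hx] [x0 xa]; [contradiction | exact (leK0 K sK fK x hx x0)].
    + exists K0. split; [exact sK0 | split; [exact fK0|]].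
      intros K sK fK x [<- | hx] x0; [|exact (leK0 K sK fK x hx x0)].
      apply NNPP. intro nx. apply none. eauto.
Qed.

Lemma exists_least_finite_index_subgroup H :
  finite_set G H -> contranormal G H -> locally_nilpotent G ->
  exists K0, is_subgroup G K0 /\ of_finite_index K0 /\
    forall K, is_subgroup G K -> of_finite_index K -> included G K0 K.
Proof.
  intros fH cH LN. pose proof fH as [lH inH].
  destruct (exists_finite_index_least_on lH) as (K0 & sK0 & fK0 & leK0).
  exists K0. split; [exact sK0 | split; [exact fK0|]].
  intros K sK fK k hk.
  destruct (contranormal_supplement_finite_index H (meet K K0) fH cH LN
              (meet_subgroup K K0 sK sK0) (of_finite_index_meet K K0 sK sK0 fK fK0) k)
    as (h & hh & k1 & k10).
  assert (h0 : K0 h).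
  { replace h with (k * (h^-1 * k)^-1) by group_eq. subgroup_mem sK0. }
  replace k with (h * (h^-1 * k)) by group_eq.
  apply (subgroupM _ sK); [apply (leK0 K sK fK h (inH h hh) h0) | exact k1].
Qed.

Lemma least_finite_index_F_perfect K0 :
  is_subgroup G K0 -> of_finite_index K0 ->
  (forall K, is_subgroup G K -> of_finite_index K -> included G K0 K) -> F_perfect G K0.
Proof.
  intros sK0 fK0 leK0. split; [exact sK0|].
  intros K sK _ fKK0. apply leK0; [exact sK|].
  apply (of_finite_index_trans K K0); assumption.
Qed.

End Groups.

Theorem lemma3p3 (G : group) :
  periodic G -> locally_nilpotent G ->
  (exists H : gsubset G, is_subgroup G H /\ finite_set G H /\ contranormal G H) ->
  finite_index G (F_part G) (whole G).
Proof.
  intros _ LN (H & _ & fH & cH).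
  destruct (exists_least_finite_index_subgroup G H fH cH LN) as (K0 & sK0 & fK0 & leK0).
  assert (F_perfect_K0 : F_perfect G K0) by (apply least_finite_index_F_perfect; assumption).
  destruct (of_finite_index_mono G K0 (F_part G)) as [l hl]; [|exact fK0|].
  - intros x hx. apply mem_generated. exists K0. split; assumption.
  - exists l. split; [intros; exact I | intros g _; apply hl].
Qed.
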